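(* Let $A=(A(i,j))_{i,j\in\mathbb{N}}$ be an infinite matrix with entries in $\{0,1\}$ such that each row has only finitely many entries equal to $1$, let $(X,\mu)$ be a $\sigma$-finite measure space and let $(\{f_i\}_{i=1}^\infty,\{D_i\}_{i=1}^\infty)$ together with a nonsingular $F:X\to X$ be an $A_\infty$-branching system on $(X,\mu)$. Suppose $\mu(R_i)<\infty$ for each $i$, and suppose each $\Phi_{f_i}$ is a positive constant function on $D_i$, say $\Phi_{f_i}=b_i>0$. Let $W\subseteq L_1(X,\mu)$ be the linear span of $\{\chi_{R_i}:i\in\mathbb{N}\}$ (finite linear combinations). Then $P_F$ maps $W$ into $W$, and the matrix of $P_F|_W:W\to W$ with respect to the family $(\chi_{R_i})_{i\in\mathbb{N}}$ is $A^TB$, where $B$ is the infinite diagonal matrix with $B_{i,i}=b_i$; that is, for every $z\in\mathbb{N}$, $$P_F(\chi_{R_z})=\sum_{j\in\mathbb{N}}(A^TB)_{j,z}\,\chi_{R_j}=\sum_{j:A(z,j)=1}b_z\,\chi_{R_j}.$$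
   Context: Notation: for measurable $Y,Z\subseteq X$, write $Y\stackrel{\mu\text{-a.e.}}{=}Z$ if $\mu(Y\setminus Z)=0=\mu(Z\setminus Y)$. For a measurable map $h$ on a measurable set $W'$, $\mu\circ h$ is the measure $E\mapsto\mu(h(E))$ on $W'$. For finite $U,V\subseteq\mathbb{N}$ and $j\in\mathbb{N}$ put $A(U,V,j)=\prod_{u\in U}A(u,j)\prod_{v\in V}(1-A(v,j))$. A transformation $F$ is nonsingular if $\mu(F^{-1}(E))=0$ whenever $\mu(E)=0$. The Perron-Frobenius operator $P_F:L_1(X,\mu)\to L_1(X,\mu)$ is defined by $\int_E P_F\psi\,d\mu=\int_{F^{-1}(E)}\psi\,d\mu$ for all measurable $E\subseteq X$ and $\psi\in L_1(X,\mu)$. The product $A^TB$ is the ordinary matrix product (well defined since $B$ is diagonal), with $(A^TB)_{j,z}=A(z,j)b_z$. An $A_\infty$-branching system on $(X,\mu)$ is a family $(\{f_i\}_{i=1}^\infty,\{D_i\}_{i=1}^\infty)$ together with a nonsingular transformation $F:X\to X$ such that: (1) $f_i:D_i\to R_i$ is measurable, $D_i,R_i$ are measurable subsets of $X$, and $f_i(D_i)\stackrel{\mu\text{-a.e.}}{=}R_i$ for each $i$; (2) $F\circ f_i=\mathrm{id}_{D_i}$ $\mu$-a.e. on $D_i$ for each $i$; (3) $\mu(R_i\cap R_j)=0$ for $i\neq j$; (4) $\mu(R_j\cap D_i)=0$ if $A(i,j)=0$ and $\mu(R_j\setminus D_i)=0$ if $A(i,j)=1$; (5) for each pair $U,V$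 of finite subsets of $\mathbb{N}$ such that $A(U,V,j)=1$ for only finitely many $j$, $\bigcap_{u\in U}D_u\cap\bigcap_{v\in V}(X\setminus D_v)\stackrel{\mu\text{-a.e.}}{=}\bigcup_{j:A(U,V,j)=1}R_j$; (6) there exist the Radon-Nikodym derivatives $\Phi_{f_i}$ of $\mu\circ f_i$ with respect to $\mu$ on $D_i$ and $\Phi_{f_i^{-1}}$ of $\mu\circ f_i^{-1}$ with respect to $\mu$ on $R_i$, where $f_i^{-1}:=F|_{R_i}$. *)

From HB Require Import structures.
From mathcomp Require Import all_boot all_order all_algebra.
From mathcomp Require Import all_classical all_reals all_analysis.
From mathcomp Require Import measurable_realfun.
Set Implicit Arguments. Unset Strict Implicit. Unset Printing Implicit Defensive.
Import Order.TTheory GRing.Theory Num.Theory.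
Local Open Scope classical_set_scope.
Local Open Scope ring_scope.

Definition ae_eqset d (T : measurableType d) (R : realType)
  (mu : {measure set T -> \bar R}) (Y Z : set T) : Prop :=
  mu (Y `\` Z) = 0%E /\ mu (Z `\` Y) = 0%E.

Definition AUV (A : nat -> nat -> bool) (U V : seq nat) (j : nat) : bool :=
  all (fun u => A u j) U && all (fun v => ~~ A v j) V.

Definition nonsingular d (T : measurableType d) (R : realType)
  (mu : {measure set T -> \bar R}) (F : T -> T) : Prop :=
  measurable_fun setT F /\
  forall E, measurable E -> mu E = 0%E -> mu (F @^-1` E) = 0%E.

(* g represents P_F psi in L_1: g is integrable and
   int_E g dmu = int_{F^-1(E)} psi dmu for all measurable E. *)
Definition PF_image d (T : measurableType d) (R : realType)
  (mu : {measure set T -> \bar R}) (F : T -> T) (psi g : T -> R) : Prop :=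
  mu.-integrable setT (EFin \o g) /\
  forall E, measurable E ->
    (\int[mu]_(x in E) (g x)%:E = \int[mu]_(x in F @^-1` E) (psi x)%:E)%E.

(* A_infinity-branching system (conditions (1)-(6)).  Images of measurable
   sets under f_i and under f_i^{-1} := F|_{R_i} are assumed measurable,
   so that mu o f_i and mu o f_i^{-1} are measures. *)
Definition branching_system d (T : measurableType d) (R : realType)
  (mu : {measure set T -> \bar R}) (A : nat -> nat -> bool)
  (f : nat -> T -> T) (D Rg : nat -> set T) (F : T -> T) : Prop :=
  nonsingular mu F /\
  (forall i, measurable (D i) /\ measurable (Rg i) /\
     measurable_fun (D i) (f i) /\
     (forall E, measurable E -> E `<=` D i -> measurable (f i @` E)) /\
     ae_eqset mu (f i @` D i) (Rg i)) /\
  (forall i, {ae mu, forall x, D i x -> F (f i x) = x}) /\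
  (forall i j, i <> j -> mu (Rg i `&` Rg j) = 0%E) /\
  (forall i j, (~~ A i j -> mu (Rg j `&` D i) = 0%E) /\
               (A i j -> mu (Rg j `\` D i) = 0%E)) /\
  (forall U V : seq nat, finite_set [set j | AUV A U V j] ->
     ae_eqset mu
       ((\bigcap_(u in [set u | u \in U]) D u) `&`
        (\bigcap_(v in [set v | v \in V]) ~` D v))
       (\bigcup_(j in [set j | AUV A U V j]) Rg j)) /\
  (forall i, exists Phi : T -> \bar R,
     measurable_fun (D i) Phi /\ (forall x, D i x -> (0 <= Phi x)%E) /\
     forall E, measurable E -> E `<=` D i ->
       mu (f i @` E) = (\int[mu]_(x in E) Phi x)%E) /\
  (forall i, (forall E, measurable E -> E `<=` Rg i -> measurable (F @` E)) /\
     exists Phi : T -> \bar R,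
     measurable_fun (Rg i) Phi /\ (forall x, Rg i x -> (0 <= Phi x)%E) /\
     forall E, measurable E -> E `<=` Rg i ->
       mu (F @` E) = (\int[mu]_(x in E) Phi x)%E).

From HB Require Import structures.
From mathcomp Require Import all_boot all_order all_algebra.
From mathcomp Require Import all_classical all_reals all_analysis.
From mathcomp Require Import measurable_realfun.
Import Order.TTheory GRing.Theory Num.Theory.
Local Open Scope classical_set_scope.
Local Open Scope ring_scope.

(** For measurable E, the defining identity of P_F asks for
   mu (R_z `&` F^-1 E).  Up to null sets R_z is f_z(D_z), and since F is a
   left inverse of f_z off a null set of D_z, the set f_z(D_z) `&` F^-1 E is
   a.e. f_z(D_z `&` E), of measure b_z mu (D_z `&` E).  Condition (5) with
   U = {z}, V = {} makes D_z a.e. the disjoint union of the R_j with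
   A(z,j) = 1, so this is b_z times the sum of the mu (R_j `&` E), i.e. the
   integral over E of the claimed image.  Linearity then gives the action of
   P_F on the span, and integrable functions with equal integrals over all
   measurable sets agree a.e., which is uniqueness in L_1. *)

Section measure_ae.
Context {d} {X : measurableType d} {R : realType} (mu : {measure set X -> \bar R}).

Lemma ae_not_null {N : set X} : measurable N -> mu N = 0%E ->
  {ae mu, forall x, ~ N x}.
Proof. by move=> mN N0; exists N; split => // x /= /contrapT. Qed.

Lemma ae_eqset_iff {Y Z : set X} : measurable Y -> measurable Z ->
  ae_eqset mu Y Z -> {ae mu, forall x, Y x <-> Z x}.
Proof.
move=> mY mZ [YZ ZY].
apply: (filterS2 (ae_filter_ringOfSetsType mu) _ (ae_not_null (measurableD mY mZ) YZ)
  (ae_not_null (measurableD mZ mY) ZY)) => x nYZ nZY.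
by split=> ?; apply: contrapT => ?; [apply: nYZ|apply: nZY].
Qed.

Lemma measure_ae_iff {Y Z : set X} : measurable Y -> measurable Z ->
  {ae mu, forall x, Y x <-> Z x} -> mu Y = mu Z.
Proof.
move=> mY mZ YZ; rewrite -[Y]setIT -[Z]setIT -!(integral_indic _ measurableT)//.
apply: ae_eq_integral => //; [exact/measurable_EFinP/measurable_indic..|].
apply: filterS YZ => x YZx _; congr (EFin _); rewrite !indicE.
by congr ((_ : bool)%:R); apply/idP/idP; rewrite !inE => /YZx.
Qed.

End measure_ae.

Section indicator_combination.
Context {d} {X : measurableType d} {R : realType} (mu : {measure set X -> \bar R}).

Lemma integrable_indic_finite (S : set X) : measurable S -> (mu S < +oo)%E ->
  mu.-integrable setT (fun x => (\1_S x)%:E).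
Proof.
move=> mS Sfin; apply/integrableP; split; first exact/measurable_EFinP.
under eq_integral do rewrite gee0_abs ?lee_fin//.
by rewrite integral_indic// setIT.
Qed.

Context {I : Type} {S : I -> set X}.
Hypotheses (mS : forall i, measurable (S i)) (S_fin : forall i, (mu (S i) < +oo)%E).

Lemma integrable_indic_comb (s : seq I) (P : pred I) (c : I -> R) :
  mu.-integrable setT (fun x => (\sum_(i <- s | P i) c i * \1_(S i) x)%:E).
Proof.
under eq_fun do rewrite -sumEFin.
apply: integrable_sum => // i _; under eq_fun do rewrite EFinM.
exact/integrableZl/integrable_indic_finite.
Qed.

Lemma integral_indic_comb (s : seq I) (P : pred I) (c : I -> R) (E : set X) :
  measurable E ->
  (\int[mu]_(x in E) (\sum_(i <- s | P i) c i * \1_(S i) x)%:E =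
    \sum_(i <- s | P i) (c i)%:E * mu (S i `&` E))%E.
Proof.
move=> mE; have intE i : mu.-integrable E (fun x => (\1_(S i) x)%:E).
  exact/(integrableS measurableT)/integrable_indic_finite.
under eq_integral do rewrite -sumEFin.
rewrite integral_sum//; last first.
  by move=> i; under eq_fun do rewrite EFinM; exact: integrableZl.
apply: eq_bigr => i _; under eq_integral do rewrite EFinM.
by rewrite integralZl// integral_indic.
Qed.

End indicator_combination.

Section Perron_Frobenius.
Context {d} {X : measurableType d} {R : realType} (mu : {measure set X -> \bar R}).
Variable F : X -> X.

Lemma PF_image_ae_unique (psi g h : X -> R) :
  PF_image mu F psi g -> PF_image mu F psi h -> {ae mu, forall x, g x = h x}.
Proof.
move=> [gi gE] [hi hE].
have := integral_ae_eq measurableT gi (measurable_int mu hi).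
move=> /(_ (fun E _ mE => etrans (gE E mE) (esym (hE E mE)))).
by apply: filterS => x /(_ I) [].
Qed.

Lemma PF_image_sum (I : Type) (s : seq I) (c : I -> R) (psi g : I -> X -> R) :
  measurable_fun setT F -> (forall i, mu.-integrable setT (EFin \o psi i)) ->
  (forall i, PF_image mu F (psi i) (g i)) ->
  PF_image mu F (fun x => \sum_(i <- s) c i * psi i x)
                (fun x => \sum_(i <- s) c i * g i x).
Proof.
move=> mF psi_int PFg.
have cg_int i : mu.-integrable setT (fun x => (c i * g i x)%:E).
  by under eq_fun do rewrite EFinM; exact/integrableZl/(PFg i).1.
split=> [|E mE].
  by rewrite /comp; under eq_fun do rewrite -sumEFin; exact: integrable_sum.
have mFE : measurable (F @^-1` E) by rewrite -[_ @^-1` _]setTI; exact: mF.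
under eq_integral do rewrite -sumEFin; under [RHS]eq_integral do rewrite -sumEFin.
rewrite !integral_sum//; last 2 first.
- move=> i; under eq_fun do rewrite EFinM.
  exact/integrableZl/(integrableS measurableT)/psi_int.
- by move=> i; exact: (integrableS measurableT).
apply: eq_bigr => i _; under eq_integral do rewrite EFinM.
under [RHS]eq_integral do rewrite EFinM.
rewrite integralZl//; last exact: integrableS measurableT mE (subsetT _) (PFg i).1.
rewrite integralZl//; last exact: integrableS measurableT mFE (subsetT _) (psi_int i).
by rewrite (PFg i).2.
Qed.

End Perron_Frobenius.

Lemma finite_nat_set_bounded (S : set nat) : finite_set S ->
  exists N, forall j, S j -> (j < N)%N.
Proof.
move=> /finite_seqP[s ->]; exists (\max_(j <- s) j).+1 => j /= js.
by rewrite ltnS; exact: leq_bigmax_seq.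
Qed.

Lemma rows_support_bounded {A : nat -> nat -> bool} (n : nat) :
  (forall i, finite_set [set j | A i j]) ->
  exists N, forall i, (i < n)%N -> forall j, (N <= j)%N -> ~~ A i j.
Proof.
move=> rows_fin.
have /finite_nat_set_bounded[N ltN] :
    finite_set (\bigcup_(i in `I_n) [set j | A i j]).
  by apply: bigcup_finite => // i _; exact: rows_fin.
exists N => i ltin j; rewrite leqNgt; apply: contra => Aij.
by apply: ltN; exists i.
Qed.

Section branching_system.
Context {d} {X : measurableType d} {R : realType} {mu : {measure set X -> \bar R}}.
Context {A : nat -> nat -> bool} {f : nat -> X -> X} {D Rg : nat -> set X}.
Context {F : X -> X} {b : nat -> R}.
Hypothesis branching : branching_system mu A f D Rg F.

Lemma measurable_F : measurable_fun setT F.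
Proof. by case: branching => -[]. Qed.

Lemma measurable_preimage_F {E : set X} : measurable E -> measurable (F @^-1` E).
Proof. by move=> mE; rewrite -[_ @^-1` _]setTI; exact: measurable_F. Qed.

Lemma measurable_D i : measurable (D i).
Proof. by case: branching => _ [/(_ i)[]]. Qed.

Lemma measurable_Rg i : measurable (Rg i).
Proof. by case: branching => _ [/(_ i)[_ []]]. Qed.

Lemma measurable_image_f {i} {E : set X} :
  measurable E -> E `<=` D i -> measurable (f i @` E).
Proof. by move=> mE ED; case: branching => _ [/(_ i)[_ [_ [_ [/(_ E mE ED)]]]]]. Qed.

Lemma image_f_ae_Rg i : {ae mu, forall x, (f i @` D i) x <-> Rg i x}.
Proof.
case: branching => _ [/(_ i)[_ [_ [_ [_ fDR]]]] _].
apply: (ae_eqset_iff mu _ (measurable_Rg i) fDR).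
exact: measurable_image_f (measurable_D i) (@subset_refl _ _).
Qed.

Lemma f_right_inverse_ae i : {ae mu, forall x, D i x -> F (f i x) = x}.
Proof. by case: branching => _ [_ [/(_ i)]]. Qed.

Lemma Rg_ae_disjoint {i j} : i <> j -> {ae mu, forall x, Rg i x -> ~ Rg j x}.
Proof.
case: branching => _ [_ [_ [/(_ i j) Rij _]]] /Rij Rij0.
have mRij := measurableI _ _ (measurable_Rg i) (measurable_Rg j).
by apply: filterS (ae_not_null mu mRij Rij0) => x + Rix Rjx; apply.
Qed.

Hypothesis rows_finite : forall i, finite_set [set j | A i j].

Lemma D_ae_cover i : {ae mu, forall x, D i x <-> exists2 j, A i j & Rg j x}.
Proof.
case: branching => _ [_ [_ [_ [_ [/(_ [:: i] [::]) cover _]]]]].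
have AUV_i : [set j | AUV A [:: i] [::] j] = [set j | A i j].
  by apply/seteqP; split => j; rewrite /= /AUV /= !andbT.
have D_i : (\bigcap_(u in [set u | u \in [:: i]]) D u) `&`
           (\bigcap_(v in [set v | v \in [::]]) ~` D v) = D i.
  apply/seteqP; split => [x [+ _]|x Dix]; first by apply; rewrite /= mem_seq1.
  by split => [u /=|v //]; rewrite mem_seq1 => /eqP ->.
rewrite AUV_i D_i in cover.
apply: (ae_eqset_iff mu (measurable_D i) _ (cover (rows_finite i))).
by apply: bigcup_measurable => j _; exact: measurable_Rg.
Qed.

Lemma indic_D_ae_sum {i N} : (forall j, (N <= j)%N -> ~~ A i j) ->
  {ae mu, forall x, \1_(D i) x = \sum_(j < N | A i j) \1_(Rg j) x :> R}.
Proof.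
move=> rowN.
have disj : {ae mu, forall x, forall j k : 'I_N, j != k -> Rg j x -> ~ Rg k x}.
  apply: filter_forall => j; apply: filter_forall => k.
  have [->|jk] := eqVneq j k; first exact: aeW.
  have neq_jk : nat_of_ord j <> k by move=> /val_inj /eqP; rewrite (negbTE jk).
  by apply: filterS (Rg_ae_disjoint neq_jk) => x + _.
apply: filterS2 (D_ae_cover i) disj => x cover disjx.
have [Dix|nDix] := pselect (D i x).
- have [j Aij Rjx] := cover.1 Dix.
  have ltjN : (j < N)%N by rewrite ltnNge; exact: contraL (rowN j) Aij.
  rewrite indicE mem_set// (bigD1 (Ordinal ltjN))//= indicE mem_set//.
  rewrite big1 ?addr0// => k /andP[_ kj]; rewrite indicE memNset// => Rkx.
  exact: disjx kj Rkx Rjx.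
- rewrite indicE memNset// big1// => j Aij; rewrite indicE memNset// => Rjx.
  by apply: nDix; apply: cover.2; exists j.
Qed.

Hypothesis Rg_finite : forall i, (mu (Rg i) < +oo)%E.

Lemma measure_D_setI {i N} {E : set X} : (forall j, (N <= j)%N -> ~~ A i j) ->
  measurable E -> mu (D i `&` E) = (\sum_(j < N | A i j) mu (Rg j `&` E))%E.
Proof.
move=> rowN mE; rewrite -integral_indic//; last exact: measurable_D.
have mRg (j : 'I_N) := measurable_Rg j; have Rg_fin (j : 'I_N) := Rg_finite j.
transitivity (\int[mu]_(x in E) (\sum_(j < N | A i j) 1 * \1_(Rg j) x)%:E)%E.
  apply: ae_eq_integral => //.
  - exact/measurable_EFinP/measurable_funTS/measurable_indic/measurable_D.
  - apply/measurable_funTS/(measurable_int mu).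
    exact: (integrable_indic_comb mu mRg Rg_fin _ (fun j => A i j) (fun _ => 1)).
  apply: filterS (indic_D_ae_sum rowN) => x -> _.
  by congr EFin; apply: eq_bigr => j _; rewrite mul1r.
rewrite (integral_indic_comb mu mRg Rg_fin)//.
by apply: eq_bigr => j _; rewrite mul1e.
Qed.

Hypothesis Phi_f : forall i (E : set X), measurable E -> E `<=` D i ->
  mu (f i @` E) = ((b i)%:E * mu E)%E.

Lemma measure_image_f_preimage i (E : set X) : measurable E ->
  mu (f i @` D i `&` F @^-1` E) = mu (f i @` (D i `&` E)).
Proof.
move=> mE; have mD := measurable_D i.
have [N [mN N0 FfN]] := f_right_inverse_ae i.
have Ff y : D i y -> ~ N y -> F (f i y) = y.
  by move=> Diy nNy; apply: contrapT => Ffy; apply: nNy; apply: FfN => /(_ Diy).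
have mDN : measurable (D i `&` N) by exact: measurableI.
have mfDN : measurable (f i @` (D i `&` N)).
  exact: measurable_image_f mDN (@subIsetl _ _ _).
have fDN0 : mu (f i @` (D i `&` N)) = 0%E.
  by rewrite Phi_f// (subset_measure0 _ _ _ N0) ?mule0.
apply: measure_ae_iff.
- apply: measurableI; last exact: measurable_preimage_F.
  exact: measurable_image_f mD (@subset_refl _ _).
- exact: measurable_image_f (measurableI _ _ mD mE) (@subIsetl _ _ _).
apply: filterS (ae_not_null mu mfDN fDN0) => x nfDNx.
have F_fy y : D i y -> f i y = x -> F x = y.
  by move=> Diy fyx; rewrite -fyx; apply: Ff => // Ny; apply: nfDNx; exists y.
split=> [[[y Diy fyx] FxE]|[y [Diy Ey] fyx]].
- by exists y => //; split => //; rewrite -(F_fy y Diy fyx).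
- by split; [exists y|rewrite /preimage/= (F_fy y Diy fyx)].
Qed.

Lemma measure_Rg_preimage {i N} {E : set X} : (forall j, (N <= j)%N -> ~~ A i j) ->
  measurable E ->
  mu (Rg i `&` F @^-1` E) = (\sum_(j < N | A i j) (b i)%:E * mu (Rg j `&` E))%E.
Proof.
move=> rowN mE; have mFE := measurable_preimage_F mE.
have mfD : measurable (f i @` D i).
  exact: measurable_image_f (measurable_D i) (@subset_refl _ _).
rewrite -ge0_sume_distrr// -(measure_D_setI rowN mE).
rewrite -Phi_f; [|exact: measurableI _ _ (measurable_D i) mE|exact: subIsetl].
rewrite -measure_image_f_preimage//.
apply: measure_ae_iff; first exact: measurableI _ _ (measurable_Rg i) mFE.
  exact: measurableI _ _ mfD mFE.
by apply: filterS (image_f_ae_Rg i) => x fDR; split=> -[/fDR].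
Qed.

Lemma PF_image_indic_Rg {i N} : (forall j, (N <= j)%N -> ~~ A i j) ->
  PF_image mu F (\1_(Rg i)) (fun x => \sum_(j < N | A i j) b i * \1_(Rg j) x).
Proof.
have mRg (j : 'I_N) := measurable_Rg j; have Rg_fin (j : 'I_N) := Rg_finite j.
move=> rowN; split.
  exact: (integrable_indic_comb mu mRg Rg_fin _ (fun j => A i j) (fun _ => b i)).
move=> E mE; rewrite (integral_indic_comb mu mRg Rg_fin)//.
rewrite integral_indic ?(measure_Rg_preimage rowN mE)//; last exact: measurable_Rg.
exact: measurable_preimage_F.
Qed.

Lemma PF_image_span n (c : nat -> R) : exists m (e : nat -> R),
  PF_image mu F (fun x => \sum_(z < n) c z * \1_(Rg z) x)
                (fun x => \sum_(j < m) e j * \1_(Rg j) x).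
Proof.
have [M rowM] := rows_support_bounded n rows_finite.
exists M, (fun j => \sum_(z < n | A z j) c z * b z).
have -> : (fun x => \sum_(j < M) (\sum_(z < n | A z j) c z * b z) * \1_(Rg j) x) =
          (fun x => \sum_(z < n) c z * \sum_(j < M | A z j) b z * \1_(Rg j) x).
  apply/funext => x; under [RHS]eq_bigr do rewrite mulr_sumr.
  rewrite (exchange_big_dep xpredT)//=; apply: eq_bigr => j _.
  by rewrite mulr_suml; apply: eq_bigr => z _; rewrite mulrA.
apply: PF_image_sum measurable_F _ _ => z.
  exact: integrable_indic_finite (measurable_Rg z) (Rg_finite z).
exact: PF_image_indic_Rg (rowM z (ltn_ord z)).
Qed.

End branching_system.

Theorem mainTheorem7 (d : measure_display) (X : measurableType d)
  (R : realType) (mu : {measure set X -> \bar R})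
  (A : nat -> nat -> bool) (f : nat -> X -> X) (D Rg : nat -> set X)
  (F : X -> X) (b : nat -> R) :
  sigma_finite setT mu ->
  (forall i, finite_set [set j | A i j]) ->
  branching_system mu A f D Rg F ->
  (forall i, (mu (Rg i) < +oo)%E) ->
  (forall i, 0 < b i) ->
  (* Phi_{f_i} = b_i : the Radon-Nikodym derivative of mu o f_i on D_i *)
  (forall i E, measurable E -> E `<=` D i ->
     mu (f i @` E) = ((b i)%:E * mu E)%E) ->
  (* P_F maps W = span {chi_{R_i}} into W *)
  (forall (n : nat) (c : nat -> R), exists (m : nat) (e : nat -> R),
     PF_image mu F (fun x => \sum_(z < n) c z * \1_(Rg z) x)
                   (fun x => \sum_(j < m) e j * \1_(Rg j) x)) /\
  (* P_F(chi_{R_z}) = sum_{j : A(z,j)=1} b_z chi_{R_j}  (in L_1) *)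
  (forall (z N : nat), (forall j, (N <= j)%N -> ~~ A z j) ->
     PF_image mu F (\1_(Rg z)) (fun x => \sum_(j < N | A z j) b z * \1_(Rg j) x)
     /\ forall g : X -> R, PF_image mu F (\1_(Rg z)) g ->
          {ae mu, forall x, g x = \sum_(j < N | A z j) b z * \1_(Rg j) x}).
Proof.
move=> _ rows_finite branching Rg_finite _ Phi_f; split.
  exact: PF_image_span branching rows_finite Rg_finite Phi_f.
move=> z N rowN.
have PF_z := PF_image_indic_Rg branching rows_finite Rg_finite Phi_f rowN.
by split=> // g PF_g; exact: PF_image_ae_unique PF_g PF_z.
Qed.
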